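(* Let PS1 and PS2 be pure strategies (as in the context) with $m_{PS1}$ finite, and suppose PS2 is complementary to PS1, i.e. $\Delta_{PS1}(X)<\Delta_{PS2}(X)$ for some $X\in\mathcal{S}_{\mathrm{non}}$. Then there exists a mixed strategy MS derived from PS1 and PS2 whose average expected hitting time satisfies $\bar m_{MS}<\bar m_{PS1}$, where $\bar m=\frac{1}{|\mathcal{S}|}\sum_{X\in\mathcal{S}}m(X)$.
   Context: A fitness function $f$ on a finite set is to be maximised. A metaheuristic generates populations $\Phi_0,\Phi_1,\dots$. Let $\mathcal{S}$ be the finite set of all populations, $\mathcal{S}_{\mathrm{opt}}$ those containing at least one optimal solution, $\mathcal{S}_{\mathrm{non}}=\mathcal{S}\setminus\mathcal{S}_{\mathrm{opt}}$. The sequence is a time-homogeneous Markov chain on $\mathcal{S}$ with transition probabilities $P(X,Y)=\Pr(\Phi_{t+1}=Y\mid\Phi_t=X)$, every state of $\mathcal{S}_{\mathrm{opt}}$ absorbing. The expected hitting time $m(X)\in[0,\infty]$ is the expected number of generations until first entering $\mathcal{S}_{\mathrm{opt}}$ from $\Phi_0=X$ ($m(X)=0$ on $\mathcal{S}_{\mathrm{opt}}$). A pure strategy is such a time-independent transition matrix. PS1, PS2 are pure strategies with transition matrices $P_1,P_2$ on the same $\mathcal{S}$ (with $\mathcal{S}_{\mathrm{opt}}$ absorbing), expected hitting times $m_{PS1},m_{PS2}$. A mixed strategy MS derived from PS1 and PS2 assigns to each $X\in\mathcal{S}$ probabilities $P_X(PS1)\in[0,1]$, $P_X(PS2)=1-P_X(PS1)$,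 and has transition matrix $P_{MS}(X,Y)=P_X(PS1)P_1(X,Y)+P_X(PS2)P_2(X,Y)$, with expected hitting time $m_{MS}$. With $d(X)=m_{PS1}(X)$, for $X\in\mathcal{S}_{\mathrm{non}}$: $\Delta_{PS1}(X)=d(X)-\sum_{Y\in\mathcal{S}_{\mathrm{non}}}P_1(X,Y)d(Y)$, $\Delta_{PS2}(X)=d(X)-\sum_{Y\in\mathcal{S}_{\mathrm{non}}}P_2(X,Y)d(Y)$. *)

From mathcomp Require Import all_boot all_order all_algebra.
From mathcomp Require Import all_classical all_reals all_analysis.
Set Implicit Arguments. Unset Strict Implicit. Unset Printing Implicit Defensive.
Import Order.TTheory GRing.Theory Num.Theory.
Local Open Scope ring_scope.

Section Defs.
Variables (R : realType) (S : finType) (opt : {set S}).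

Definition pure_strategy (P : S -> S -> R) : Prop :=
  (forall X Y, 0 <= P X Y) /\ (forall X, \sum_(Y : S) P X Y = 1) /\
  (forall X, X \in opt -> P X X = 1).

(* surv P t X = Pr(Phi_0,...,Phi_t all in S_non | Phi_0 = X) = Pr(T > t). *)
Fixpoint surv (P : S -> S -> R) (t : nat) (X : S) : R :=
  match t with
  | 0 => (X \notin opt)%:R
  | t'.+1 => (X \notin opt)%:R * \sum_(Y : S) P X Y * surv P t' Y
  end.

(* Expected hitting time of S_opt, E[T] = sum_{t>=0} Pr(T > t), in [0, +oo]. *)
Definition hitting_time (P : S -> S -> R) (X : S) : \bar R :=
  (\sum_(0 <= t <oo) (surv P t X)%:E)%E.

Definition mixed (q : S -> R) (P1 P2 : S -> S -> R) : S -> S -> R :=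
  fun X Y => q X * P1 X Y + (1 - q X) * P2 X Y.

Definition Delta (P : S -> S -> R) (d : S -> R) (X : S) : R :=
  d X - \sum_(Y | Y \notin opt) P X Y * d Y.

Definition avg_time (m : S -> \bar R) : \bar R :=
  ((\sum_(X : S) m X) * ((#|S|%:R : R)^-1)%:E)%E.

End Defs.

From mathcomp Require Import all_boot all_order all_algebra.
From mathcomp Require Import all_classical all_reals all_analysis.
From mathcomp Require Import ring lra.
Set Implicit Arguments. Unset Strict Implicit.
Import Order.TTheory GRing.Theory Num.Theory numFieldNormedType.Exports.
Local Open Scope ring_scope.

(* m_PS1 solves m = 1 + P1 m on S_non, i.e. Delta_PS1 = 1 there.  Let X0 be a
   state with Delta_PS2(X0) = 1 + eps, eps > 0, and let MS play PS2 at X0 and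
   PS1 elsewhere.  Then b := m_PS1 - eps [X = X0] satisfies Delta_MS b >= 1 on
   S_non, and a comparison principle (each truncated expectation E[min(T, n)]
   stays below any nonnegative b with Delta b >= 1) gives m_MS <= b, which is
   strictly below m_PS1 at X0. *)

Section HittingTime.
Local Open Scope classical_set_scope.
Variables (R : realType) (S : finType) (opt : {set S}).

Lemma sum_notin_opt (P : S -> S -> R) (f : S -> R) X :
  (forall Y, Y \in opt -> f Y = 0) ->
  \sum_(Y | Y \notin opt) P X Y * f Y = \sum_Y P X Y * f Y.
Proof.
move=> f0; rewrite big_mkcond /=; apply: eq_bigr => Y _.
by case: ifPn => // /negbNE /f0 ->; rewrite mulr0.
Qed.

Lemma mixed_ge0 (q : S -> R) (P1 P2 : S -> S -> R) :
  (forall X, 0 <= q X <= 1) -> (forall X Y, 0 <= P1 X Y) ->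
  (forall X Y, 0 <= P2 X Y) -> forall X Y, 0 <= mixed q P1 P2 X Y.
Proof.
move=> q01 P1_ge0 P2_ge0 X Y; have /andP[q_ge0 q_le1] := q01 X.
by rewrite addr_ge0 ?mulr_ge0 ?subr_ge0.
Qed.

Lemma Delta_mixed (q : S -> R) (P1 P2 : S -> S -> R) (d : S -> R) X :
  Delta opt (mixed q P1 P2) d X =
  q X * Delta opt P1 d X + (1 - q X) * Delta opt P2 d X.
Proof.
rewrite /Delta /mixed.
have -> : \sum_(Y | Y \notin opt) (q X * P1 X Y + (1 - q X) * P2 X Y) * d Y =
    q X * \sum_(Y | Y \notin opt) P1 X Y * d Y +
    (1 - q X) * \sum_(Y | Y \notin opt) P2 X Y * d Y.
  by rewrite !mulr_sumr -big_split; apply: eq_bigr => Y _ /=; ring.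
ring.
Qed.

Lemma avg_time_lt (m : S -> \bar R) (b c : S -> R) :
  (forall X, (m X <= (b X)%:E)%E) -> \sum_X b X < \sum_X c X ->
  (avg_time m < avg_time (fun X => (c X)%:E))%E.
Proof.
move=> m_le_b sum_lt.
have card_gt0 : (0 < #|S|)%N.
  rewrite lt0n; apply: contraTneq sum_lt => /card0_eq S0.
  by rewrite !big_pred0 ?ltxx // => X; rewrite -[X \in predT]S0.
rewrite /avg_time lte_pmul2r ?lte_fin ?invr_gt0 ?ltr0n //.
apply: (@le_lt_trans _ _ (\sum_X (b X)%:E)%E); first exact: lee_sum.
by rewrite !sumEFin lte_fin.
Qed.

Section Strategy.
Variable P : S -> S -> R.
Hypothesis P_ge0 : forall X Y, 0 <= P X Y.

(* E[min(T, n)] *)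
Definition trunc_hitting_time (n : nat) (X : S) : R :=
  \sum_(0 <= t < n) surv opt P t X.

Lemma surv_ge0 t X : 0 <= surv opt P t X.
Proof.
elim: t X => [|t IH] X /=; first by rewrite ler0n.
by rewrite mulr_ge0 ?ler0n // sumr_ge0 // => Y _; rewrite mulr_ge0.
Qed.

Lemma surv_opt t X : X \in opt -> surv opt P t X = 0.
Proof. by case: t => [|t] /= ->; rewrite ?mul0r. Qed.

Lemma trunc_hitting_time_opt n X : X \in opt -> trunc_hitting_time n X = 0.
Proof.
by move=> Xopt; rewrite /trunc_hitting_time big1 // => t _; rewrite surv_opt.
Qed.

Lemma trunc_hitting_timeS n X : trunc_hitting_time n.+1 X =
  (X \notin opt)%:R * (1 + \sum_Y P X Y * trunc_hitting_time n Y).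
Proof.
rewrite /trunc_hitting_time big_nat_recl //= mulrDr mulr1; congr (_ + _).
under eq_bigr do rewrite /= mulr_sumr.
rewrite exchange_big /= mulr_sumr.
apply: eq_bigr => Y _; rewrite !mulr_sumr.
by apply: eq_bigr => t _; rewrite mulrA.
Qed.

Lemma hitting_time_cvg X :
  \sum_(0 <= t < n) (surv opt P t X)%:E @[n --> \oo] --> hitting_time opt P X.
Proof. by apply: is_cvg_nneseries => t _ _; rewrite lee_fin surv_ge0. Qed.

Lemma hitting_time_ge0 X : (0 <= hitting_time opt P X)%E.
Proof. by apply: nneseries_ge0 => t _ _; rewrite lee_fin surv_ge0. Qed.

Lemma hitting_time_le X (c : R) :
  (forall n, trunc_hitting_time n X <= c) -> (hitting_time opt P X <= c%:E)%E.
Proof.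
move=> le_c; apply: lime_le; first exact: cvgP (hitting_time_cvg (X:=X)).
by apply: nearW => n; rewrite sumEFin lee_fin; exact: le_c.
Qed.

Lemma le_Delta_sub (b d : S -> R) X : (forall Y, b Y <= d Y) ->
  Delta opt P d X - (d X - b X) <= Delta opt P b X.
Proof.
move=> le_bd; rewrite /Delta.
suff : \sum_(Y | Y \notin opt) P X Y * b Y <=
       \sum_(Y | Y \notin opt) P X Y * d Y.
  by move=> ?; lra.
by rewrite ler_sum // => Y _; rewrite ler_wpM2l.
Qed.

Lemma hitting_time_le_Delta (d : S -> R) X :
  (forall Y, 0 <= d Y) -> (forall Y, Y \notin opt -> 1 <= Delta opt P d Y) ->
  (hitting_time opt P X <= (d X)%:E)%E.
Proof.
move=> d_ge0 Delta_ge1; apply: hitting_time_le => n.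
elim: n X => [|n IH] X; first by rewrite /trunc_hitting_time big_geq.
rewrite trunc_hitting_timeS; have [Xopt|Xnon] := boolP (X \in opt).
  by rewrite mul0r d_ge0.
rewrite mul1r -(sum_notin_opt _ _ (trunc_hitting_time_opt n)).
have := Delta_ge1 X Xnon; rewrite /Delta lerBrDr; apply: le_trans.
by rewrite lerD2l ler_sum // => Y _; rewrite ler_wpM2l.
Qed.

Section Finite.
Hypothesis m_fin : forall X, (hitting_time opt P X < +oo)%E.

Let m X := fine (hitting_time opt P X).

Lemma hitting_timeE X : hitting_time opt P X = (m X)%:E.
Proof. by rewrite fineK // ge0_fin_numE ?hitting_time_ge0. Qed.

Lemma trunc_hitting_time_cvg X : trunc_hitting_time ^~ X @ \oo --> m X.
Proof.
have := hitting_time_cvg (X:=X); rewrite hitting_timeE => /fine_cvg.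
by apply: cvg_trans; apply: near_eq_cvg; apply: nearW => n /=; rewrite sumEFin.
Qed.

Lemma hitting_time_fixpoint X :
  m X = (X \notin opt)%:R * (1 + \sum_Y P X Y * m Y).
Proof.
have shifted : trunc_hitting_time n.+1 X @[n --> \oo] --> m X.
  rewrite (cvg_shiftS (trunc_hitting_time ^~ X)).
  exact: trunc_hitting_time_cvg.
apply: (cvg_unique _ shifted) => /=; first exact: Rhausdorff.
under eq_cvg do rewrite /= trunc_hitting_timeS.
apply: cvgM; first exact: cvg_cst.
apply: cvgD; first exact: cvg_cst.
apply: (@cvg_big _ _ +%R 0 predT add_continuous) => Y _.
by apply: cvgM; [exact: cvg_cst | exact: trunc_hitting_time_cvg].
Qed.

Lemma hitting_time_opt X : X \in opt -> m X = 0.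
Proof. by move=> Xopt; rewrite hitting_time_fixpoint Xopt mul0r. Qed.

Lemma Delta_hitting_time X : X \notin opt -> Delta opt P m X = 1.
Proof.
move=> Xnon; rewrite /Delta (sum_notin_opt _ _ hitting_time_opt).
by rewrite {1}hitting_time_fixpoint Xnon mul1r addrK.
Qed.

End Finite.
End Strategy.
Definition switch_at (X0 X : S) : R := (X != X0)%:R.

Lemma switch_at01 X0 X : 0 <= switch_at X0 X <= 1.
Proof. by rewrite /switch_at; case: (X != X0); rewrite /= ?lexx ?ler01. Qed.

Section Switch.
Variables (P1 P2 : S -> S -> R) (X0 : S).
Hypothesis P1_ge0 : forall X Y, 0 <= P1 X Y.
Hypothesis P2_ge0 : forall X Y, 0 <= P2 X Y.
Hypothesis m1_fin : forall X, (hitting_time opt P1 X < +oo)%E.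
Hypothesis X0non : X0 \notin opt.

Let d X := fine (hitting_time opt P1 X).
Hypothesis Delta_lt : Delta opt P1 d X0 < Delta opt P2 d X0.

Let eps := Delta opt P2 d X0 - 1.
Let b X := d X - (X == X0)%:R * eps.
Let MS := mixed (switch_at X0) P1 P2.

Let MS_ge0 : forall X Y, 0 <= MS X Y.
Proof. exact: mixed_ge0 (switch_at01 X0) P1_ge0 P2_ge0. Qed.

Let Delta1 X : X \notin opt -> Delta opt P1 d X = 1.
Proof. exact: Delta_hitting_time. Qed.

Let eps_gt0 : 0 < eps.
Proof. by rewrite subr_gt0 -(Delta1 X0non). Qed.

Let b_ge0 X : 0 <= b X.
Proof.
have d_ge0 Y : 0 <= d Y by rewrite fine_ge0 ?hitting_time_ge0.
rewrite /b; case: eqP => [->|_]; last by rewrite mul0r subr0.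
have : 0 <= \sum_(Y | Y \notin opt) P2 X0 Y * d Y.
  by rewrite sumr_ge0 // => Y _; rewrite mulr_ge0.
by rewrite /eps /Delta mul1r; lra.
Qed.

Let b_le_d X : b X <= d X.
Proof. by rewrite /b lerBlDr lerDl mulr_ge0 // ltW. Qed.

Let Delta_b X : X \notin opt -> 1 <= Delta opt MS b X.
Proof.
move=> Xnon; apply: le_trans (le_Delta_sub MS_ge0 X b_le_d).
rewrite Delta_mixed /b /switch_at; case: eqVneq => [->|neX] /=.
  by rewrite mul0r add0r subr0 !mul1r /eps; lra.
by rewrite Delta1 // mul0r subr0 subrr mul0r addr0 mulr1 subrr subr0.
Qed.

Lemma avg_time_switch_lt :
  (avg_time (hitting_time opt MS) < avg_time (hitting_time opt P1))%E.
Proof.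
have -> : hitting_time opt P1 = fun X => (d X)%:E.
  by apply: funext => X; exact: hitting_timeE.
apply: (avg_time_lt (b := b)) => [X|].
  exact: hitting_time_le_Delta.
rewrite /b sumrB ltrBlDl ltrDr (bigD1 X0) //= eqxx mul1r big1 ?addr0 //.
by move=> X /negbTE ->; rewrite mul0r.
Qed.

End Switch.
End HittingTime.

Arguments switch_at {R S} X0 X.

Theorem corollary4 (R : realType) (S : finType) (opt : {set S})
    (P1 P2 : S -> S -> R) :
  pure_strategy opt P1 -> pure_strategy opt P2 ->
  (forall X, (hitting_time opt P1 X < +oo)%E) ->
  (exists X, X \notin opt /\
     Delta opt P1 (fun Y => fine (hitting_time opt P1 Y)) X <
     Delta opt P2 (fun Y => fine (hitting_time opt P1 Y)) X) ->
  exists q : S -> R, (forall X, 0 <= q X <= 1) /\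
    (avg_time (hitting_time opt (mixed q P1 P2)) <
     avg_time (hitting_time opt P1))%E.
Proof.
move=> [P1_ge0 _] [P2_ge0 _] m1_fin [X0 [X0non Delta_lt]].
exists (switch_at X0); split; first exact: switch_at01.
exact: avg_time_switch_lt.
Qed.
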